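(* Let $X$ and $Y$ be real Hilbert spaces with $X \neq \{0\}$, let $a$ and $b$ be continuous bilinear forms on $X \times Y$, and let $A, B : X \to Y$ be continuous linear operators. Suppose there are constants $C_1 > 0$ and $C_2 \geq 0$ such that for all $u \in X$: $$b(u, B u) + a(u, A u) \geq \frac{1}{C_1} \| u\|^2,$$ $$b(u, A u) \geq 0, \qquad |a(u, B u)| \leq C_2\, a(u, Au).$$ Then $b+a$ satisfies an inf-sup condition on $X \times Y$: there exists $c > 0$ such that $$\inf_{u \in X\setminus\{0\}} \ \sup_{v \in Y\setminus\{0\}} \frac{|(b+a)(u,v)|}{\| u \| \, \|v\| } \geq c.$$ *)

From HB Require Import structures.
From mathcomp Require Import all_boot all_order all_algebra.
From mathcomp Require Import all_classical all_reals all_analysis.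
Set Implicit Arguments. Unset Strict Implicit. Unset Printing Implicit Defensive.
Import Order.TTheory GRing.Theory Num.Theory.
Import numFieldNormedType.Exports.
Local Open Scope classical_set_scope.
Local Open Scope ring_scope.

(* An inner product on a real normed space V inducing its norm:
   bilinear (linear in the first argument + symmetric), and
   `|x| = sqrt <x,x>.  Together with completeness of V
   (V : completeNormedModType R) this makes V a real Hilbert space. *)
Definition inner_product_inducing_norm (R : realType) (V : normedModType R)
  (ip : V -> V -> R) : Prop :=
  [/\ (forall (k : R) (x y z : V), ip (k *: x + y) z = k * ip x z + ip y z),
      (forall x y : V, ip x y = ip y x) &
      (forall x : V, `|x| = Num.sqrt (ip x x))].

Definition is_hilbert (R : realType) (V : completeNormedModType R) : Prop :=
  exists ip : V -> V -> R, inner_product_inducing_norm ip.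

Definition bilinear_form (R : realType) (X Y : normedModType R)
  (a : X -> Y -> R) : Prop :=
  (forall (k : R) (x x' : X) (y : Y), a (k *: x + x') y = k * a x y + a x' y) /\
  (forall (k : R) (x : X) (y y' : Y), a x (k *: y + y') = k * a x y + a x y').

Definition continuous_bilinear_form (R : realType) (X Y : normedModType R)
  (a : X -> Y -> R) : Prop :=
  bilinear_form a /\ continuous (fun p : X * Y => a p.1 p.2).

Definition infsup (R : realType) (X Y : normedModType R) (f : X -> Y -> R)
  : \bar R :=
  ereal_inf [set ereal_sup [set ((`|f u v| / (`|u| * `|v|))%:E) | v in ~` [set (0 : Y)]]
            | u in ~` [set (0 : X)]].

From HB Require Import structures.
From mathcomp Require Import all_boot all_order all_algebra.
From mathcomp Require Import all_classical all_reals all_analysis.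
From mathcomp Require Import ring lra.
Import Order.TTheory GRing.Theory Num.Theory.
Import numFieldNormedType.Exports.
Local Open Scope classical_set_scope.
Local Open Scope ring_scope.

(* Testing (b + a)(u, .) against v = (1 + C2) A u + B u gives
   (b + a)(u, v) = [b(u, B u) + a(u, A u)] + (1 + C2) b(u, A u)
                   + [C2 a(u, A u) + a(u, B u)] >= |u|^2 / C1,
   while |v| <= M |u| for a constant M built from the operator norms of A and B;
   hence the inf-sup constant is at least 1 / (C1 M). *)

Lemma continuous_linear_bounded {R : realType} {X Y : normedModType R}
    {A : {linear X -> Y}} :
  continuous A -> exists2 r : R, 0 < r & forall x, `|A x| <= r * `|x|.
Proof.
move=> cA; apply: pinfty_ex_gt0; apply/linear_boundedP.
exact/linear_bounded_continuous.
Qed.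

Lemma bilinear_form_x0 {R : realType} {X Y : normedModType R} {a : X -> Y -> R} :
  bilinear_form a -> forall x, a x 0 = 0.
Proof.
move=> [_ a_linr] x; have := a_linr 1 x 0 0.
rewrite scaler0 addr0 mul1r; lra.
Qed.

Section InfsupTestMap.
Variables (R : realType) (X Y : normedModType R) (f : X -> Y -> R) (T : X -> Y).
Variables (c M : R).
Hypotheses (c_gt0 : 0 < c) (M_gt0 : 0 < M) (f_x0 : forall u, f u 0 = 0).
Hypothesis T_bounded : forall u, `|T u| <= M * `|u|.
Hypothesis T_coercive : forall u, c * `|u| ^+ 2 <= f u (T u).

Lemma test_map_neq0 u : u != 0 -> T u != 0.
Proof.
move=> u0; apply: contraTneq (T_coercive u) => ->; rewrite f_x0 -ltNge.
by rewrite mulr_gt0 // exprn_gt0 // normr_gt0.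
Qed.

Lemma infsup_ge_test_map : ((c / M)%:E <= infsup f)%E.
Proof.
apply: le_ereal_inf_tmp => _ [u /= /eqP u0 <-].
have u_gt0 : 0 < `|u| by rewrite normr_gt0.
have Tu_gt0 : 0 < `|T u| by rewrite normr_gt0 test_map_neq0.
apply: le_ereal_sup_tmp; exists (`|f u (T u)| / (`|u| * `|T u|))%:E.
  by exists (T u) => //=; apply/eqP/test_map_neq0.
rewrite lee_fin ler_pdivlMr ?mulr_gt0 //.
apply: le_trans (le_trans (T_coercive u) (ler_norm _)).
rewrite mulrAC ler_pdivrMr // -mulrA ler_pM2l // expr2 -mulrA ler_pM2l //.
by rewrite mulrC.
Qed.

End InfsupTestMap.

Lemma continuous_linear_combination_bounded {R : realType} {X Y : normedModType R}
    {A B : {linear X -> Y}} (k : R) :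
  0 <= k -> continuous A -> continuous B ->
  exists2 M : R, 0 < M & forall u, `|k *: A u + B u| <= M * `|u|.
Proof.
move=> k0 cA cB.
have [rA rA0 bA] := continuous_linear_bounded cA.
have [rB rB0 bB] := continuous_linear_bounded cB.
exists (k * rA + rB); first by nra.
move=> u; rewrite (le_trans (ler_normD _ _)) // normrZ ger0_norm //.
have := bA u; have := bB u; nra.
Qed.

Lemma coercive_test_direction {R : realType} {X Y : normedModType R}
    {a b : X -> Y -> R} {A B : X -> Y} {C1 C2 : R} {u : X} :
  0 <= C2 -> bilinear_form a -> bilinear_form b ->
  b u (B u) + a u (A u) >= C1^-1 * `|u| ^+ 2 -> b u (A u) >= 0 ->
  `|a u (B u)| <= C2 * a u (A u) ->
  C1^-1 * `|u| ^+ 2 <= b u ((1 + C2) *: A u + B u) + a u ((1 + C2) *: A u + B u).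
Proof.
move=> C2_ge0 [_ a_linr] [_ b_linr] coer bA_ge0; rewrite ler_norml => /andP[aB_ge _].
by rewrite a_linr b_linr; nra.
Qed.

Theorem proposition2 (R : realType) (X Y : completeNormedModType R)
  (hX : is_hilbert X) (hY : is_hilbert Y)
  (hX0 : exists x : X, x != 0)
  (a b : X -> Y -> R)
  (ha : continuous_bilinear_form a) (hb : continuous_bilinear_form b)
  (A B : {linear X -> Y}) (hA : continuous A) (hB : continuous B)
  (C1 C2 : R) (hC1 : 0 < C1) (hC2 : 0 <= C2)
  (h1 : forall u : X, b u (B u) + a u (A u) >= C1^-1 * `|u| ^+ 2)
  (h2 : forall u : X, b u (A u) >= 0)
  (h3 : forall u : X, `|a u (B u)| <= C2 * a u (A u)) :
  exists c : R, 0 < c /\ (c%:E <= infsup (fun u v => (b u v + a u v)%R))%E.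
Proof.
have k_ge0 : 0 <= 1 + C2 by lra.
have [M M_gt0 bounded] := continuous_linear_combination_bounded _ k_ge0 hA hB.
have ba_x0 u : b u 0 + a u 0 = 0.
  by rewrite (bilinear_form_x0 ha.1) (bilinear_form_x0 hb.1) addr0.
exists (C1^-1 / M); split; first by rewrite divr_gt0 ?invr_gt0.
apply: (@infsup_ge_test_map _ _ _ (fun u v => b u v + a u v)
          (fun u => (1 + C2) *: A u + B u) C1^-1 M).
- by rewrite invr_gt0.
- exact: M_gt0.
- exact: ba_x0.
- exact: bounded.
- by move=> u; exact: coercive_test_direction hC2 ha.1 hb.1 (h1 u) (h2 u) (h3 u).
Qed.
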